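(* Let $(X,d)$ be a metric space, let $x_0\in X$ and $r\ge 0$, and let $C_{x_0,r}=\{x\in X: d(x_0,x)=r\}$. Define $\varphi:X\to[0,\infty)$ by $\varphi(x)=d(x,x_0)$ for all $x\in X$. If a self-mapping $T:X\to X$ satisfies $$d(x,Tx)\le \frac{\varphi(x)-\varphi(Tx)}{h}$$ for all $x\in X$ and some $h>1$, then $T=I_X$ (the identity map of $X$) and $C_{x_0,r}$ is a fixed circle of $T$.
   Context: For a metric space $(X,d)$, the circle with center $x_0\in X$ and radius $r$ is $C_{x_0,r}=\{x\in X: d(x_0,x)=r\}$. For a self-mapping $T:X\to X$, the circle $C_{x_0,r}$ is called a fixed circle of $T$ if $Tx=x$ for every $x\in C_{x_0,r}$. $I_X$ denotes the identity map $I_X(x)=x$. *)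

From Stdlib Require Export Reals.
Open Scope R_scope.

Definition is_metric {X : Type} (d : X -> X -> R) : Prop :=
  (forall x y, 0 <= d x y) /\
  (forall x y, d x y = 0 <-> x = y) /\
  (forall x y, d x y = d y x) /\
  (forall x y z, d x z <= d x y + d y z).

Definition circle {X : Type} (d : X -> X -> R) (x0 : X) (r : R) : X -> Prop :=
  fun x => d x0 x = r.

Definition fixed_circle {X : Type} (d : X -> X -> R) (T : X -> X) (x0 : X) (r : R) : Prop :=
  forall x, circle d x0 r x -> T x = x.

Definition I_X {X : Type} : X -> X := fun x => x.

(* The function phi = d(., x0) is 1-Lipschitz, so phi x - phi (T x) <= d(x, T x).
   The hypothesis then gives h d(x, T x) <= d(x, T x), which forces d(x, T x) = 0
   because h > 1; hence T x = x everywhere, in particular on every circle. *)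
From Stdlib Require Import Lra.

Lemma metric_dist_sub_le {X : Type} (d : X -> X -> R) (x y z : X) :
  is_metric d -> d x z - d y z <= d x y.
Proof.
  intros [_ [_ [Hsym Htri]]].
  pose proof (Htri x y z); lra.
Qed.

Lemma fixed_of_lipschitz_descent {X : Type} (d : X -> X -> R) (phi : X -> R)
  (T : X -> X) (h : R) (x : X) :
  is_metric d -> 1 < h ->
  (forall y z, phi y - phi z <= d y z) ->
  d x (T x) <= (phi x - phi (T x)) / h ->
  T x = x.
Proof.
  intros Hd Hh Hlip Hdesc.
  destruct Hd as [Hpos [Hzero _]].
  assert (Hscaled : h * d x (T x) <= phi x - phi (T x)).
  { apply Rmult_le_compat_l with (r := h) in Hdesc; [|lra].
    replace (h * ((phi x - phi (T x)) / h)) with (phi x - phi (T x)) in Hdesc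
      by (field; lra).
    exact Hdesc. }
  pose proof (Hlip x (T x)) as Hstep.
  pose proof (Hpos x (T x)).
  symmetry; apply Hzero; nra.
Qed.

Theorem theorem2p21 (X : Type) (d : X -> X -> R) (Hd : is_metric d)
  (x0 : X) (r : R) (Hr : 0 <= r) (T : X -> X) (h : R) (Hh : 1 < h) :
  let phi := fun x => d x x0 in
  (forall x, d x (T x) <= (phi x - phi (T x)) / h) ->
  (forall x, T x = I_X x) /\ fixed_circle d T x0 r.
Proof.
  intros phi Hdesc.
  assert (Hfix : forall x, T x = x).
  { intro x.
    apply (fixed_of_lipschitz_descent d phi T h x Hd Hh); [|apply Hdesc].
    intros y z; apply metric_dist_sub_le, Hd. }
  split.
  - exact Hfix.
  - intros x _; apply Hfix.
Qed.
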